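(* Let $\mathcal{C}$ be a prevariety over a finite alphabet $A$. Then $\mathit{SF}(\mathcal{C}) = \mathrm{FO}(\mathbb{I}_{\mathcal{C}})$.
   Context: Fix a finite alphabet $A$. A prevariety is a class of regular languages over $A$ containing $\emptyset$ and $A^*$, closed under union, intersection, complement, and under the quotients $u^{-1}L=\{w\mid uw\in L\}$ and $Lu^{-1}=\{w\mid wu\in L\}$. $\mathit{SF}(\mathcal{C})$ is the least class containing $\mathcal{C}$ and all $\{a\}$ ($a\in A$), closed under union, complement and concatenation. A word $w=a_1\cdots a_n$ is viewed as a structure with domain $\{0,1,\dots,n+1\}$; positions $1\le i\le n$ carry label $a_i$, while $0$ and $n+1$ are unlabeled. For positions $i<j$, $w(i,j)=a_{i+1}\cdots a_{j-1}$. First-order formulas over a set $\mathbb{S}$ of predicates use first-order variables ranging over positions, two constants $\mathit{min}$ and $\mathit{max}$ interpreted as $0$ and $n+1$, atomic formulas $x=y$ and $P(x_1,\dots,x_k)$ for $P\in\mathbb{S}$ (arguments being variables or constants), and are closed under disjunction, negation and existential quantification, with the usual semantics. The label predicates are unary predicates $a(x)$ for $a\in A$, holding iff position $x$ is labeled $a$ (so never at $0$ or $n+1$). For a set $\mathbb{S}$ of predicates, $\mathrm{FO}(\mathbb{S})$ is the class of languages $\{w\mid w\models\varphi\}$ defined by first-order sentences $\varphi$ over the label predicates together with $\mathbb{S}$. $\mathbb{I}_{\mathcal{C}}$ is the set containing, for each $L\in\mathcal{C}$, a binary predicate $I_L$ with $I_L(i,j)$ holding in $w$ iff $i<j$ and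 $w(i,j)\in L$. *)

From mathcomp Require Import all_boot.
Set Implicit Arguments. Unset Strict Implicit. Unset Printing Implicit Defensive.

Section Languages.
Variable A : finType.

Definition lang := seq A -> Prop.

Definition regular (L : lang) : Prop :=
  exists (Q : finType) (q0 : Q) (delta : Q -> A -> Q) (F : pred Q),
    forall w, L w <-> foldl delta q0 w \in F.

Definition lang_empty : lang := fun _ => False.
Definition lang_full : lang := fun _ => True.
Definition lang_union (L1 L2 : lang) : lang := fun w => L1 w \/ L2 w.
Definition lang_inter (L1 L2 : lang) : lang := fun w => L1 w /\ L2 w.
Definition lang_compl (L : lang) : lang := fun w => ~ L w.
Definition lang_lquot (u : seq A) (L : lang) : lang := fun w => L (u ++ w).
Definition lang_rquot (L : lang) (u : seq A) : lang := fun w => L (w ++ u).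
Definition lang_concat (L1 L2 : lang) : lang :=
  fun w => exists u v, w = u ++ v /\ L1 u /\ L2 v.
Definition lang_letter (a : A) : lang := fun w => w = [:: a].

Definition prevariety (C : lang -> Prop) : Prop :=
  (forall L, C L -> regular L) /\
  C lang_empty /\ C lang_full /\
  (forall L1 L2, C L1 -> C L2 -> C (lang_union L1 L2)) /\
  (forall L1 L2, C L1 -> C L2 -> C (lang_inter L1 L2)) /\
  (forall L, C L -> C (lang_compl L)) /\
  (forall u L, C L -> C (lang_lquot u L)) /\
  (forall u L, C L -> C (lang_rquot L u)).

Inductive SF (C : lang -> Prop) : lang -> Prop :=
  | SF_base L : C L -> SF C L
  | SF_letter a : SF C (lang_letter a)
  | SF_union L1 L2 : SF C L1 -> SF C L2 -> SF C (lang_union L1 L2)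
  | SF_compl L : SF C L -> SF C (lang_compl L)
  | SF_concat L1 L2 : SF C L1 -> SF C L2 -> SF C (lang_concat L1 L2).

Inductive fterm := TVar of nat | TMin | TMax.

Inductive formula :=
  | FEq of fterm & fterm
  | FLabel of A & fterm
  | FInf of lang & fterm & fterm
  | FOr of formula & formula
  | FNot of formula
  | FEx of nat & formula.

Fixpoint uses_only (C : lang -> Prop) (phi : formula) : Prop :=
  match phi with
  | FEq _ _ | FLabel _ _ => True
  | FInf L _ _ => C L
  | FOr f g => uses_only C f /\ uses_only C g
  | FNot f => uses_only C f
  | FEx _ f => uses_only C f
  end.

Definition term_fv (t : fterm) : seq nat :=
  if t is TVar x then [:: x] else [::].

Fixpoint fv (phi : formula) : seq nat :=
  match phi with
  | FEq t1 t2 => term_fv t1 ++ term_fv t2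
  | FLabel _ t => term_fv t
  | FInf _ t1 t2 => term_fv t1 ++ term_fv t2
  | FOr f g => fv f ++ fv g
  | FNot f => fv f
  | FEx x f => filter (fun y => y != x) (fv f)
  end.

Definition sentence (phi : formula) : Prop := fv phi = [::].

(* The word w = a_1...a_n has positions 0, 1, ..., n+1. *)
Definition tval (w : seq A) (e : nat -> nat) (t : fterm) : nat :=
  match t with TVar x => e x | TMin => 0 | TMax => (size w).+1 end.

(* w(i,j) = a_{i+1} ... a_{j-1} *)
Definition infix_word (w : seq A) (i j : nat) : seq A := drop i (take j.-1 w).

Definition upd (e : nat -> nat) (x p : nat) : nat -> nat :=
  fun y => if y == x then p else e y.

Fixpoint sat (w : seq A) (e : nat -> nat) (phi : formula) : Prop :=
  match phi with
  | FEq t1 t2 => tval w e t1 = tval w e t2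
  | FLabel a t =>
      let p := tval w e t in (0 < p <= size w) /\ nth a w p.-1 = a
  | FInf L t1 t2 =>
      let i := tval w e t1 in let j := tval w e t2 in
      i < j /\ L (infix_word w i j)
  | FOr f g => sat w e f \/ sat w e g
  | FNot f => ~ sat w e f
  | FEx x f => exists p, p <= (size w).+1 /\ sat w (upd e x p) f
  end.

Definition FO_IC (C : lang -> Prop) (L : lang) : Prop :=
  exists phi, uses_only C phi /\ sentence phi /\
    forall w, L w <-> sat w (fun _ => 0) phi.

End Languages.

(* SF(C) <= FO(I_C): by induction on SF(C), every language L gets a formula scheme F(x, y)
   expressing that the infix strictly between positions x and y lies in L.  Languages of C
   are the atoms I_L, Boolean operations are connectives, a letter is an infix of length
   one, and a concatenation guesses the cut position z together with its predecessor z'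
   and asks for L1 on (x, z) and L2 on (z', y).

   FO(I_C) <= SF(C): marked positions cut a word into blocks u_0, ..., u_m separated by
   letters b_1, ..., b_m.  By induction on formulas, for every assignment of the free
   variables to marks and every choice of the b_j, the tuples (u_0, ..., u_m) satisfying
   the formula form a finite union of products L_0 x ... x L_m of SF(C) languages; such
   unions are closed under Boolean operations.  An atom I_L(x, y) only involves the blocks
   between two marks, and since L is regular and C is closed under quotients, L(uv) is a
   finite disjunction of conditions P(u) /\ Q(v) with P, Q in C; this splits I_L along the
   marked letters.  A quantified position is either a mark or lies inside a block
   u_i = u' c u'', which then becomes two blocks; projecting back merges two factors into
   L . c . L', the one place where concatenation is used.  A sentence involves a single
   block: the word itself. *)

From mathcomp Require Import all_boot zify.
From Stdlib Require Import Classical FunctionalExtensionality PropExtensionality.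

Set Implicit Arguments. Unset Strict Implicit. Unset Printing Implicit Defensive.

Fixpoint Has T (P : T -> Prop) (s : seq T) : Prop :=
  if s is x :: s' then P x \/ Has P s' else False.

Fixpoint All T (P : T -> Prop) (s : seq T) : Prop :=
  if s is x :: s' then P x /\ All P s' else True.

Section PropQuantifiers.
Variables T U : Type.
Implicit Types (P Q : T -> Prop) (s : seq T).

Lemma HasP (X : eqType) (P : X -> Prop) (s : seq X) : Has P s <-> exists2 x, x \in s & P x.
Proof.
elim: s => [|y s IH] /=; first by split=> // [[]].
rewrite IH; split=> [[Py|[x xs Px]]|[x]].
- by exists y; rewrite ?mem_head.
- by exists x; rewrite // in_cons xs orbT.
- by rewrite in_cons => /orP[/eqP-> | xs] Px; [left | right; exists x].
Qed.

Lemma All_in (X : eqType) (P : X -> Prop) (s : seq X) : (forall x, x \in s -> P x) -> All P s.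
Proof.
elim: s => //= y s IH Ps; split; first by apply: Ps; rewrite mem_head.
by apply: IH => x xs; apply: Ps; rewrite in_cons xs orbT.
Qed.

Lemma All_forall P s : (forall x, P x) -> All P s.
Proof. by move=> Px; elim: s. Qed.

Lemma sub_Has P Q s : (forall x, P x -> Q x) -> Has P s -> Has Q s.
Proof. by move=> PQ; elim: s => //= x s IH [/PQ|/IH]; [left | right]. Qed.

Lemma sub_All P Q s : (forall x, P x -> Q x) -> All P s -> All Q s.
Proof. by move=> PQ; elim: s => //= x s IH [/PQ ? /IH]. Qed.

Lemma eq_Has_in R P Q s : All R s -> (forall x, R x -> (P x <-> Q x)) ->
  (Has P s <-> Has Q s).
Proof. by move=> + PQ; elim: s => //= x s IH [/PQ-> /IH->]. Qed.

Lemma Has_exists P s : Has P s -> exists x, P x.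
Proof. by elim: s => //= x s IH [Px|/IH//]; exists x. Qed.

Lemma Has_All P Q s : Has P s -> All Q s -> exists x, P x /\ Q x.
Proof.
by elim: s => //= x s IH [Px|Ps] [Qx Qs]; [exists x | exact: IH].
Qed.

Lemma Has_andl (B : Prop) P s : B /\ Has P s <-> Has (fun x => B /\ P x) s.
Proof. by elim: s => [|x s IH] /=; [tauto | rewrite -IH; tauto]. Qed.

Lemma Has_andr (B : Prop) P s : Has P s /\ B <-> Has (fun x => P x /\ B) s.
Proof. by elim: s => [|x s IH] /=; [tauto | rewrite -IH; tauto]. Qed.

Lemma Has_exists2 V (P : T -> U -> V -> Prop) s :
  (exists u v, Has (fun x => P x u v) s) <-> Has (fun x => exists u v, P x u v) s.
Proof.
elim: s => [|x s IH] /=; first by split=> [[u [v []]]|].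
rewrite -IH; split=> [[u [v [Pu|Hs]]]|[[u [v Pu]]|[u [v Hs]]]].
- by left; exists u, v.
- by right; exists u, v.
- by exists u, v; left.
- by exists u, v; right.
Qed.

Lemma not_Has P s : ~ Has P s <-> All (fun x => ~ P x) s.
Proof. by elim: s => [|x s IH] /=; [tauto | rewrite -IH; tauto]. Qed.

Lemma Has_cat P s1 s2 : Has P (s1 ++ s2) <-> Has P s1 \/ Has P s2.
Proof. by elim: s1 => [|x s1 IH] /=; [tauto | rewrite IH; tauto]. Qed.

Lemma All_cat P s1 s2 : All P (s1 ++ s2) <-> All P s1 /\ All P s2.
Proof. by elim: s1 => [|x s1 IH] /=; [tauto | rewrite IH; tauto]. Qed.

Lemma Has_map (f : U -> T) P (s : seq U) : Has P (map f s) <-> Has (P \o f) s.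
Proof. by elim: s => //= x s ->. Qed.

Lemma All_map (f : U -> T) P (s : seq U) : All P (map f s) <-> All (P \o f) s.
Proof. by elim: s => //= x s ->. Qed.

Lemma All_nseq P n x : P x -> All P (nseq n x).
Proof. by move=> Px; elim: n. Qed.

Lemma All_take P n s : All P s -> All P (take n s).
Proof. by elim: s n => [|x s IH] [|n] //= [? /IH]. Qed.

Lemma All_drop P n s : All P s -> All P (drop n s).
Proof. by elim: s n => [|x s IH] [|n] //= [? /IH]. Qed.

Lemma All_nth P x0 n s : P x0 -> All P s -> P (nth x0 s n).
Proof. by move=> Px0; elim: s n => [|x s IH] [|n] //= [? /IH]. Qed.

End PropQuantifiers.

Section LanguageClasses.
Variable A : finType.
Implicit Types (L : lang A) (K C : lang A -> Prop).

Lemma lang_ext L1 L2 : (forall w, L1 w <-> L2 w) -> L1 = L2.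
Proof.
by move=> eqL; apply: functional_extensionality => w; apply: propositional_extensionality.
Qed.

Lemma lang_class_ext K L1 L2 : (forall w, L1 w <-> L2 w) -> K L1 -> K L2.
Proof. by move=> /lang_ext->. Qed.

Lemma SF_inter C L1 L2 : SF C L1 -> SF C L2 -> SF C (lang_inter L1 L2).
Proof.
move=> SF1 SF2.
apply: (@lang_class_ext _ (lang_compl (lang_union (lang_compl L1) (lang_compl L2)))).
  by move=> w; rewrite /lang_compl /lang_union /lang_inter; tauto.
by do 2 constructor; constructor.
Qed.

End LanguageClasses.

(** * SF(C) is contained in FO(I_C) *)

Section Formulas.
Variable A : finType.
Implicit Types (w : seq A) (e : nat -> nat) (t : fterm) (f g : formula A).

Definition term_below k t := if t is TVar x then x < k else true.

Lemma term_belowS k t : term_below k t -> term_below k.+1 t.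
Proof. by case: t => //= x /ltnW. Qed.

Lemma tval_upd_fresh w e x p t : term_below x t -> tval w (upd e x p) t = tval w e t.
Proof. by case: t => //= y lt_yx; rewrite /upd ltn_eqF. Qed.

Lemma tval_upd_var w e x p : tval w (upd e x p) (TVar x) = p.
Proof. by rewrite /= /upd eqxx. Qed.

Definition FAnd f g := FNot (FOr (FNot f) (FNot g)).
Definition FLt t1 t2 : formula A := FInf (@lang_full A) t1 t2.
Definition FSucc k t1 t2 :=
  FAnd (FLt t1 t2) (FNot (FEx k (FAnd (FLt t1 (TVar k)) (FLt (TVar k) t2)))).

Lemma sat_FEx w e x f : sat w e (FEx x f) <-> exists p, p <= (size w).+1 /\ sat w (upd e x p) f.
Proof. by []. Qed.

Lemma sat_FAnd w e f g : sat w e (FAnd f g) <-> sat w e f /\ sat w e g.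
Proof. by rewrite /=; split=> [/not_or_and [/NNPP ? /NNPP ?]|[? ?] []]. Qed.

Lemma sat_FLt w e t1 t2 : sat w e (FLt t1 t2) <-> tval w e t1 < tval w e t2.
Proof. by rewrite /=; split=> [[]|]. Qed.

Lemma sat_FSucc w e k t1 t2 : term_below k t1 -> term_below k t2 ->
  tval w e t2 <= (size w).+1 ->
  (sat w e (FSucc k t1 t2) <-> tval w e t2 = (tval w e t1).+1).
Proof.
move=> t1k t2k; set i := tval w e t1; set j := tval w e t2 => le_j.
have between p : sat w (upd e k p) (FAnd (FLt t1 (TVar k)) (FLt (TVar k) t2)) <-> i < p < j.
  by rewrite sat_FAnd !sat_FLt tval_upd_var !tval_upd_fresh //; split=> [[-> ->]|/andP].
rewrite sat_FAnd sat_FLt -/i -/j; split=> [[lt_ij no_p]|eq_j]; last first.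
  by split=> [|[p [_ /between]]]; lia.
have [//|lt_Sij] : j = i.+1 \/ i.+1 < j by lia.
by case: no_p; exists i.+1; split; [lia | apply/between; lia].
Qed.

Lemma size_infix_word w i j : i < j -> j <= (size w).+1 -> size (infix_word w i j) = j.-1 - i.
Proof. by move=> lt_ij le_j; rewrite /infix_word size_drop size_takel //; lia. Qed.

Lemma nth_infix_word x w i j r : r < j.-1 - i -> nth x (infix_word w i j) r = nth x w (i + r).
Proof. by move=> lt_r; rewrite /infix_word nth_drop nth_take //; lia. Qed.

Lemma drop_cat_leq (T : Type) n (s1 s2 : seq T) :
  n <= size s1 -> drop n (s1 ++ s2) = drop n s1 ++ s2.
Proof.
move=> le_n; rewrite drop_cat; case: ltnP => // ge_n.
have -> : n = size s1 by apply/eqP; rewrite eqn_leq le_n.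
by rewrite subnn drop0 drop_size.
Qed.

Lemma infix_word_whole w : infix_word w 0 (size w).+1 = w.
Proof. by rewrite /infix_word /= drop0 take_size. Qed.

Lemma infix_word_cat w i p j : i < p -> p <= j -> j <= (size w).+1 ->
  infix_word w i p ++ infix_word w p.-1 j = infix_word w i j.
Proof.
move=> lt_ip le_pj le_j; rewrite /infix_word -(take_takel w (_ : p.-1 <= j.-1)); last by lia.
by rewrite -drop_cat_leq ?cat_take_drop // !size_takel //; lia.
Qed.

Lemma infix_word_letter w i j a : i < j -> j <= (size w).+1 ->
  (infix_word w i j = [:: a] <-> j = i.+2 /\ nth a w i = a).
Proof.
move=> lt_ij le_j; have := size_infix_word lt_ij le_j.
have := @nth_infix_word a w i j 0; rewrite addn0.
case: (infix_word w i j) => [|b [|c s]] /= nth_b sz_b; try by split=> // -[]; lia.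
rewrite -nth_b ?sz_b //; split=> [[->]|[_ ->]] //; split=> //; lia.
Qed.

(* [F k] may use the variables k, k+1, ... as bound variables. *)
Definition defines (L : lang A) (F : nat -> fterm -> fterm -> formula A) :=
  forall k t1 t2 w e, term_below k t1 -> term_below k t2 ->
    tval w e t1 < tval w e t2 -> tval w e t2 <= (size w).+1 ->
    (sat w e (F k t1 t2) <-> L (infix_word w (tval w e t1) (tval w e t2))).

Definition FLetter a k t1 t2 :=
  FEx k (FAnd (FAnd (FSucc k.+1 t1 (TVar k)) (FSucc k.+1 (TVar k) t2)) (FLabel a (TVar k))).

Lemma defines_FLetter a : defines (lang_letter a) (FLetter a).
Proof.
move=> k t1 t2 w e t1k t2k; set i := tval w e t1; set j := tval w e t2 => lt_ij le_j.
rewrite /lang_letter infix_word_letter // sat_FEx.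
have t1k' := term_belowS t1k; have t2k' := term_belowS t2k.
have body p : p <= (size w).+1 ->
    sat w (upd e k p) (FAnd (FAnd (FSucc k.+1 t1 (TVar k)) (FSucc k.+1 (TVar k) t2))
                            (FLabel a (TVar k))) <->
    [/\ p = i.+1, j = p.+1, 0 < p <= size w & nth a w p.-1 = a].
  move=> le_p; rewrite 2!sat_FAnd !sat_FSucc ?tval_upd_var ?tval_upd_fresh //= -/i -/j.
  by rewrite /upd eqxx; split=> [[[-> ->] []]|[-> -> ? ?]].
split=> [[p [le_p /(body p le_p) [eq_p eq_j _ nth_a]]]|[eq_j nth_a]].
  by split; [lia | rewrite eq_p in nth_a].
exists i.+1; split; first lia.
by apply/body; [lia | split=> //; lia].
Qed.

(* w(i,j) = w(i,p) w(q,j) when q + 1 = p; as there is no successor predicate, q is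
   quantified too and FSucc pins it down. *)
Definition FConcat (F1 F2 : nat -> fterm -> fterm -> formula A) k t1 t2 :=
  FEx k (FEx k.+1 (FAnd (FAnd (FLt t1 (TVar k)) (FLt (TVar k.+1) t2))
                        (FAnd (FSucc k.+2 (TVar k.+1) (TVar k))
                              (FAnd (F1 k.+2 t1 (TVar k)) (F2 k.+2 (TVar k.+1) t2))))).

Lemma defines_FConcat L1 L2 F1 F2 :
  defines L1 F1 -> defines L2 F2 -> defines (lang_concat L1 L2) (FConcat F1 F2).
Proof.
move=> def1 def2 k t1 t2 w e t1k t2k; set i := tval w e t1; set j := tval w e t2.
move=> lt_ij le_j; pose e' p q := upd (upd e k p) k.+1 q.
have t1k1 := term_belowS t1k; have t2k1 := term_belowS t2k.
have t1k2 := term_belowS t1k1; have t2k2 := term_belowS t2k1.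
have body p q : p <= (size w).+1 ->
    sat w (e' p q) (FAnd (FAnd (FLt t1 (TVar k)) (FLt (TVar k.+1) t2))
                         (FAnd (FSucc k.+2 (TVar k.+1) (TVar k))
                               (FAnd (F1 k.+2 t1 (TVar k)) (F2 k.+2 (TVar k.+1) t2)))) <->
    [/\ i < p, q < j, p = q.+1, L1 (infix_word w i p) & L2 (infix_word w q j)].
  move=> le_p.
  have Et1 : tval w (e' p q) t1 = i by rewrite /e' !tval_upd_fresh.
  have Et2 : tval w (e' p q) t2 = j by rewrite /e' !tval_upd_fresh.
  have Ek : tval w (e' p q) (TVar k) = p by rewrite /e' tval_upd_fresh ?tval_upd_var //=.
  have Ek1 : tval w (e' p q) (TVar k.+1) = q by rewrite /e' tval_upd_var.
  have F1E : i < p -> sat w (e' p q) (F1 k.+2 t1 (TVar k)) <-> L1 (infix_word w i p).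
    by move=> lt_ip; move: (def1 k.+2 t1 (TVar k) w (e' p q)); rewrite Et1 Ek; apply=> //=.
  have F2E : q < j -> sat w (e' p q) (F2 k.+2 (TVar k.+1) t2) <-> L2 (infix_word w q j).
    by move=> lt_qj; move: (def2 k.+2 (TVar k.+1) t2 w (e' p q)); rewrite Et2 Ek1; apply=> //=.
  rewrite 4!sat_FAnd !sat_FLt sat_FSucc ?Et1 ?Et2 ?Ek ?Ek1 //=.
  split=> [[[lt_ip lt_qj] [eq_p [s1 s2]]]|[lt_ip lt_qj eq_p s1 s2]].
    by split=> //; [apply/F1E | apply/F2E].
  by do !split=> //; [apply/F1E | apply/F2E].
rewrite /FConcat sat_FEx; split.
  move=> [p [le_p]]; rewrite sat_FEx => -[q [_ /(body p q le_p) [lt_ip lt_qj eq_p s1 s2]]].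
  exists (infix_word w i p), (infix_word w q j); split=> //.
  have -> : q = p.-1 by lia.
  by rewrite infix_word_cat //; lia.
move=> [u [v [eq_uv [L1u L2v]]]].
have := size_infix_word lt_ij le_j; rewrite eq_uv size_cat => sz_uv.
move def_p : (i + (size u).+1) => p.
have lt_ip : i < p by lia.
have le_pj : p <= j by lia.
have := infix_word_cat lt_ip le_pj le_j; rewrite eq_uv => /eqP.
rewrite eqseq_cat => [/andP[/eqP eq_u /eqP eq_v]|]; last first.
  by rewrite size_infix_word -?def_p ?addnS /= ?addKn //; lia.
exists p; split; first lia.
rewrite sat_FEx; exists p.-1; split; first lia.
by apply/body; [lia | split; rewrite ?eq_u ?eq_v //; lia].
Qed.

End Formulas.

Arguments FLt {A}.
Arguments FSucc {A}.

Section Scoping.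
Variable A : finType.
Implicit Types (f g : formula A) (t : fterm).

Definition fv_below k f := all (fun y => y < k) (fv f).

Lemma term_fv_below k t : all (fun y => y < k) (term_fv t) = term_below k t.
Proof. by case: t => //= x; rewrite andbT. Qed.

Lemma fv_below0_sentence f : fv_below 0 f -> sentence f.
Proof. by rewrite /fv_below /sentence; case: fv. Qed.

Lemma fv_below_FEx k f : fv_below k.+1 f -> fv_below k (FEx k f).
Proof. by rewrite /fv_below /= all_filter; apply: sub_all => y /=; case: eqP => //= ne_yk; lia. Qed.

Lemma fv_below_FNot k f : fv_below k (FNot f) = fv_below k f.
Proof. by []. Qed.

Lemma fv_below_FOr k f g : fv_below k (FOr f g) = fv_below k f && fv_below k g.
Proof. exact: all_cat. Qed.

Lemma fv_below_FAnd k f g : fv_below k (FAnd f g) = fv_below k f && fv_below k g.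
Proof. exact: all_cat. Qed.

Lemma fv_below_FInf k L t1 t2 : fv_below k (FInf L t1 t2) = term_below k t1 && term_below k t2.
Proof. by rewrite /fv_below /= all_cat !term_fv_below. Qed.

Lemma fv_below_FSucc k t1 t2 : term_below k t1 -> term_below k t2 -> fv_below k (FSucc k t1 t2).
Proof.
move=> t1k t2k; rewrite fv_below_FAnd fv_below_FInf t1k t2k fv_below_FNot; apply: fv_below_FEx.
by rewrite fv_below_FAnd !fv_below_FInf (term_belowS t1k) (term_belowS t2k) /= ltnSn.
Qed.

Lemma fv_below_FLetter a k t1 t2 : term_below k t1 -> term_below k t2 ->
  fv_below k (FLetter a k t1 t2).
Proof.
move=> t1k t2k; apply: fv_below_FEx.
rewrite 2!fv_below_FAnd !fv_below_FSucc ?(term_belowS t1k) ?(term_belowS t2k) //=.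
by rewrite /fv_below /= andbT.
Qed.

Lemma fv_below_FConcat (F1 F2 : nat -> fterm -> fterm -> formula A) k t1 t2 :
  (forall k' t1' t2', term_below k' t1' -> term_below k' t2' -> fv_below k' (F1 k' t1' t2')) ->
  (forall k' t1' t2', term_below k' t1' -> term_below k' t2' -> fv_below k' (F2 k' t1' t2')) ->
  term_below k t1 -> term_below k t2 -> fv_below k (FConcat F1 F2 k t1 t2).
Proof.
move=> F1k F2k t1k t2k; have t1k2 := term_belowS (term_belowS t1k).
have t2k2 := term_belowS (term_belowS t2k).
apply/fv_below_FEx/fv_below_FEx; rewrite 4!fv_below_FAnd !fv_below_FInf.
rewrite fv_below_FSucc ?F1k ?F2k ?t1k2 ?t2k2 //=; lia.
Qed.

End Scoping.

Section SFDefinable.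
Variable A : finType.
Variable C : lang A -> Prop.
Hypothesis C_full : C (@lang_full A).

Definition FO_scheme (L : lang A) (F : nat -> fterm -> fterm -> formula A) :=
  [/\ forall k t1 t2, uses_only C (F k t1 t2),
      forall k t1 t2, term_below k t1 -> term_below k t2 -> fv_below k (F k t1 t2)
    & defines L F].

Lemma SF_FO_scheme L : SF C L -> exists F, FO_scheme L F.
Proof.
elim=> {L} [L CL|a|L1 L2 _ [F1 [C1 fv1 def1]] _ [F2 [C2 fv2 def2]]|L _ [F [CF fvF defF]]
           |L1 L2 _ [F1 [C1 fv1 def1]] _ [F2 [C2 fv2 def2]]].
- exists (fun _ => FInf L); split=> // [k t1 t2 t1k t2k|k t1 t2 w e _ _ lt_ij _].
    by rewrite fv_below_FInf t1k.
  by rewrite /=; tauto.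
- exists (FLetter a); split; [by [] | exact: fv_below_FLetter | exact: defines_FLetter].
- exists (fun k t1 t2 => FOr (F1 k t1 t2) (F2 k t1 t2)); split=> //.
    by move=> k t1 t2 t1k t2k; rewrite fv_below_FOr fv1 ?fv2.
  by move=> k t1 t2 w e *; rewrite /= def1 // def2.
- exists (fun k t1 t2 => FNot (F k t1 t2)); split=> // k t1 t2 w e *.
  by rewrite /= defF.
- exists (FConcat F1 F2); split; last exact: defines_FConcat.
    by move=> k t1 t2 /=.
  by move=> k t1 t2; apply: fv_below_FConcat.
Qed.

Lemma SF_FO_IC L : SF C L -> FO_IC C L.
Proof.
move=> /SF_FO_scheme [F [CF fvF defF]]; exists (F 0 TMin TMax); split=> //; split.
  exact/fv_below0_sentence/fvF.
by move=> w; rewrite (defF 0 TMin TMax w (fun _ => 0)) //= infix_word_whole.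
Qed.

End SFDefinable.

(** * Words cut into blocks at marked positions *)

Section Interleaving.
Variable A : Type.
Implicit Types (u : seq A) (us : seq (seq A)) (bs : seq A).

(* [interleave [:: u_0; ...; u_m] [:: b_1; ...; b_m]] is u_0 b_1 u_1 ... b_m u_m, and
   [mark us j] is the position of b_j in it; mark 0 = 0 and mark (m+1) = n+1 are the two
   unlabeled end positions. *)
Fixpoint interleave us bs : seq A :=
  match us, bs with
  | u :: us', b :: bs' => u ++ b :: interleave us' bs'
  | u :: _, [::] => u
  | [::], _ => [::]
  end.

Definition mark us j := sumn (map (fun u => (size u).+1) (take j us)).
Arguments mark : simpl never.

Lemma mark0 us : mark us 0 = 0.
Proof. by rewrite /mark take0. Qed.

Lemma mark_cons u us j : mark (u :: us) j.+1 = (size u).+1 + mark us j.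
Proof. by []. Qed.

Lemma markS us j : j < size us -> mark us j.+1 = mark us j + (size (nth [::] us j)).+1.
Proof.
elim: us j => [|u us IH] [|j] //= lt_j; first by rewrite mark_cons !mark0 addn0.
by rewrite !mark_cons IH ?addnA.
Qed.

Lemma mark_oversize us j : size us <= j -> mark us j = mark us (size us).
Proof. by move=> le_j; rewrite /mark take_oversize // take_size. Qed.

Lemma leq_mark_id us j : j <= size us -> j <= mark us j.
Proof. by elim: j => [|j IH] // lt_j; rewrite markS //; have := IH (ltnW lt_j); lia. Qed.

Lemma ltn_mark us i j : i <= size us -> j <= size us -> (mark us i < mark us j) = (i < j).
Proof.
suff mono k l : k < l -> l <= size us -> mark us k < mark us l.
  move=> le_i le_j; case: (ltngtP i j) => [lt_ij|lt_ji|->]; rewrite ?ltnn //.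
  - exact: mono.
  - by apply/negbTE; rewrite -leqNgt ltnW // mono.
elim: l => [|l IH] // lt_kl le_l; rewrite markS //.
have [lt_kl'|->] : k < l \/ k = l by lia.
  by have := IH lt_kl' (ltnW le_l); lia.
lia.
Qed.

Lemma leq_mark us i j : i <= size us -> j <= size us -> (mark us i <= mark us j) = (i <= j).
Proof. by move=> le_i le_j; rewrite leqNgt ltn_mark // -leqNgt. Qed.

Lemma mark_inj us i j : i <= size us -> j <= size us -> mark us i = mark us j -> i = j.
Proof.
move=> le_i le_j eq_ij; apply/eqP.
by rewrite eqn_leq -(leq_mark le_i le_j) -(leq_mark le_j le_i) eq_ij leqnn.
Qed.

Lemma mark_size us bs : size us = (size bs).+1 ->
  mark us (size us) = (size (interleave us bs)).+1.
Proof.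
elim: us bs => [|u us IH] [|b bs] //=.
  by case: us {IH} => //= _; rewrite mark_cons mark0 addn0.
by move=> [/IH eq_us]; rewrite mark_cons eq_us size_cat /=; lia.
Qed.

Definition split_nth i us u1 u2 := take i us ++ u1 :: u2 :: drop i.+1 us.

Lemma split_nth0 u us u1 u2 : split_nth 0 (u :: us) u1 u2 = [:: u1, u2 & us].
Proof. by rewrite /split_nth take0 /= drop0. Qed.

Lemma split_nthS i u us u1 u2 :
  split_nth i.+1 (u :: us) u1 u2 = u :: split_nth i us u1 u2.
Proof. by []. Qed.

Lemma size_split_nth i us u1 u2 :
  i < size us -> size (split_nth i us u1 u2) = (size us).+1.
Proof. by move=> lt_i; rewrite /split_nth size_cat /= size_drop size_takel; lia. Qed.

Lemma take_interleave us bs j : size us = (size bs).+1 -> 0 < j -> j <= size us ->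
  take (mark us j).-1 (interleave us bs) = interleave (take j us) (take j.-1 bs).
Proof.
elim: us bs j => [|u us IH] bs [|j] // szus _ le_j; rewrite mark_cons.
case: bs szus => [|b bs] /= szus.
  by case: us {IH} szus le_j => // _; case: j => // _; rewrite mark0 addn0 take_size.
rewrite take_cat ltnNge leq_addr /= addKn.
case: j le_j => [|j] le_j; first by rewrite mark0 take0 cats0.
have mark_gt0 : 0 < mark us j.+1 by have := @leq_mark_id us j.+1; rewrite /= in le_j; lia.
by rewrite -(prednK mark_gt0) /= IH //; case: szus.
Qed.

Lemma drop_interleave us bs i : size us = (size bs).+1 -> i < size us ->
  drop (mark us i) (interleave us bs) = interleave (drop i us) (drop i bs).
Proof.
elim: i us bs => [|i IH] us bs szus lt_i; first by rewrite mark0 !drop0.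
case: us szus lt_i => [|u us] //= szus lt_i.
case: bs szus => [|b bs] /= szus; first by case: us szus lt_i.
rewrite mark_cons drop_cat ltnNge (_ : size u <= _) /=; last by lia.
by rewrite (_ : _ - size u = (mark us i).+1) /=; [rewrite IH //; case: szus | lia].
Qed.

Lemma nth_interleave a us bs j : size us = (size bs).+1 -> 0 < j -> j <= size bs ->
  nth a (interleave us bs) (mark us j).-1 = nth a bs j.-1.
Proof.
elim: us bs j => [|u us IH] [|b bs] [|j] // szus _ le_j; rewrite /= in szus le_j.
rewrite mark_cons /= nth_cat ltnNge leq_addr /= addKn.
case: j le_j => [|j] le_j; first by rewrite mark0.
have mark_gt0 : 0 < mark us j.+1 by have := @leq_mark_id us j.+1; lia.
by rewrite -(prednK mark_gt0) /= IH //; case: szus.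
Qed.

Lemma interleave_split_nth i us bs u1 c u2 : size us = (size bs).+1 -> i < size us ->
  nth [::] us i = u1 ++ c :: u2 ->
  interleave (split_nth i us u1 u2) (take i bs ++ c :: drop i bs) = interleave us bs.
Proof.
elim: i us bs => [|i IH] [|u us] bs // szus lt_i eq_u; rewrite /= in szus lt_i eq_u.
  rewrite split_nth0 take0 drop0 /= eq_u; case: bs szus => [|b bs] /=.
    by case: us {lt_i}.
  by rewrite -catA.
case: bs szus => [|b bs] szus; rewrite /= in szus; first by case: us szus lt_i eq_u.
by rewrite split_nthS /= IH //; case: szus.
Qed.

Lemma mark_split_nth i us u1 c u2 : i < size us -> nth [::] us i = u1 ++ c :: u2 ->
  mark (split_nth i us u1 u2) i.+1 = mark us i + (size u1).+1.
Proof.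
elim: i us => [|i IH] [|u us] // lt_i eq_u; rewrite /= in lt_i eq_u.
  by rewrite split_nth0 mark_cons !mark0 addn0.
by rewrite split_nthS !mark_cons IH // addnA.
Qed.

Lemma mark_split_nth_bump i us u1 c u2 j : i < size us -> nth [::] us i = u1 ++ c :: u2 ->
  mark (split_nth i us u1 u2) (bump i.+1 j) = mark us j.
Proof.
elim: i us j => [|i IH] [|u us] [|j] // lt_i eq_u; rewrite /= in lt_i eq_u.
- by rewrite split_nth0 /bump /= !mark_cons eq_u size_cat /=; lia.
- by rewrite bumpS split_nthS !mark_cons IH.
Qed.

Lemma mark_cases us p : p <= mark us (size us) ->
  (exists2 j, j <= size us & p = mark us j) \/
  (exists i u1 c u2, [/\ i < size us, nth [::] us i = u1 ++ c :: u2
                        & p = mark us i + (size u1).+1]).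
Proof.
elim: us p => [|u us IH] p.
  by rewrite mark0 leqn0 => /eqP->; left; exists 0; rewrite ?mark0.
rewrite /= mark_cons => le_p.
have [->|p_gt0] := posnP p; first by left; exists 0; rewrite ?mark0.
have [le_pu|lt_up] := leqP p (size u).
  right; case eq_drop: (drop p.-1 u) => [|c u2].
    by have := size_drop p.-1 u; rewrite eq_drop /=; lia.
  exists 0, (take p.-1 u), c, u2; split=> //; first by rewrite /= -eq_drop cat_take_drop.
  by rewrite mark0 size_takel; lia.
have /IH [[j le_j eq_p]|[i [u1 [c [u2 [lt_i eq_ui eq_p]]]]]] :
    p - (size u).+1 <= mark us (size us) by lia.
  by left; exists j.+1; rewrite ?mark_cons //; lia.
by right; exists i.+1, u1, c, u2; split=> //; rewrite mark_cons; lia.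
Qed.

End Interleaving.

(** * Finite unions of products of languages *)

Section Rectangles.
Variable A : finType.
Implicit Types (R : seq (lang A)) (us : seq (seq A)).

Fixpoint in_rect R us : Prop :=
  match R, us with
  | [::], [::] => True
  | L :: R', u :: us' => L u /\ in_rect R' us'
  | _, _ => False
  end.

Lemma in_rect_full us : in_rect (nseq (size us) (@lang_full A)) us.
Proof. by elim: us. Qed.

Lemma in_rect_cat R1 R2 us1 us2 : size R1 = size us1 ->
  (in_rect (R1 ++ R2) (us1 ++ us2) <-> in_rect R1 us1 /\ in_rect R2 us2).
Proof.
elim: R1 us1 => [|L R1 IH] [|u us1] //=; first tauto.
by move=> [] /IH->; tauto.
Qed.

Fixpoint rect_inter R1 R2 :=
  match R1, R2 with
  | L1 :: R1', L2 :: R2' => lang_inter L1 L2 :: rect_inter R1' R2'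
  | _, _ => [::]
  end.

Lemma size_rect_inter R1 R2 : size R1 = size R2 -> size (rect_inter R1 R2) = size R1.
Proof. by elim: R1 R2 => [|L1 R1 IH] [|L2 R2] //= [] /IH->. Qed.

Lemma in_rect_inter R1 R2 us : size R1 = size R2 ->
  (in_rect (rect_inter R1 R2) us <-> in_rect R1 us /\ in_rect R2 us).
Proof.
elim: R1 R2 us => [|L1 R1 IH] [|L2 R2] [|u us] //=; try tauto.
by move=> [] /IH->; rewrite /lang_inter; tauto.
Qed.

Definition rect_pad i R k := nseq i (@lang_full A) ++ R ++ nseq k (@lang_full A).

Lemma in_rect_pad M i k R us : size us = M -> size R = k -> i + k <= M ->
  (in_rect (rect_pad i R (M - i - k)) us <-> in_rect R (drop i (take (i + k) us))).
Proof.
move=> szus szR le_ikM.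
have sz_take : size (take i us) = i by apply: size_takel; rewrite szus; lia.
have sz_mid : size (drop i (take (i + k) us)) = k.
  by rewrite size_drop size_takel ?szus; lia.
have us_split : us = take i us ++ drop i (take (i + k) us) ++ drop (i + k) us.
  by rewrite catA -{1}(take_takel us (leq_addr k i)) !cat_take_drop.
rewrite {1}us_split /rect_pad in_rect_cat ?size_nseq ?sz_take //.
rewrite in_rect_cat ?szR ?sz_mid //.
have := in_rect_full (take i us); have := in_rect_full (drop (i + k) us).
rewrite sz_take size_drop szus; have -> : M - i - k = M - (i + k) by lia.
tauto.
Qed.

Definition rect_merge i (c : A) R :=
  take i R ++ lang_concat (nth (@lang_full A) R i)
                 (lang_concat (lang_letter c) (nth (@lang_full A) R i.+1)) :: drop i.+2 R.

Lemma size_rect_merge i c R : i.+1 < size R -> size (rect_merge i c R) = (size R).-1.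
Proof. by move=> lt_i; rewrite /rect_merge size_cat /= size_drop size_takel; lia. Qed.

Lemma in_rect_merge i c R us : i < size us -> size R = (size us).+1 ->
  (in_rect (rect_merge i c R) us <->
   exists u1 u2, nth [::] us i = u1 ++ c :: u2 /\ in_rect R (split_nth i us u1 u2)).
Proof.
elim: i us R => [|i IH] [|u us] R //= lt_i szR.
  case: R szR => [|L1 [|L2 R]] // _.
  rewrite /rect_merge /split_nth !take0 /= !drop0 /lang_concat /lang_letter; split.
    move=> [[u1 [v [-> [L1u1 [uc [u2 [-> [-> L2u2]]]]]]]] inR].
    by exists u1, u2.
  move=> [u1 [u2 [-> [L1u1 [L2u2 inR]]]]]; split=> //.
  by exists u1, (c :: u2); do !split => //; exists [:: c], u2.
case: R szR => [|L R] // [szR].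
rewrite /rect_merge /= -/(rect_merge i c R) IH //.
split=> [[Lu [u1 [u2 [-> inR]]]]|[u1 [u2 [-> [Lu inR]]]]]; first by exists u1, u2.
by split=> //; exists u1, u2.
Qed.

End Rectangles.

Section Decomposable.
Variable A : finType.
Variable K : lang A -> Prop.
Implicit Types (S : seq (seq A) -> Prop) (L : lang A) (R : seq (lang A)).

(* The K-analogue of Mezei's recognizable relations: finite unions of products of
   K-languages. *)
Definition decomposable m S :=
  exists Rs : seq (seq (lang A)), All (fun R => size R = m /\ All K R) Rs /\
    forall us, size us = m -> (S us <-> Has (fun R => in_rect R us) Rs).

Lemma decomposable_ext m S S' :
  (forall us, size us = m -> (S us <-> S' us)) -> decomposable m S -> decomposable m S'.
Proof. by move=> SS' [Rs [RsK SRs]]; exists Rs; split=> // us szus; rewrite -SS' ?SRs. Qed.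

Lemma decomposable_false m : decomposable m (fun _ => False).
Proof. by exists [::]. Qed.

Lemma decomposable_rect m R : size R = m -> All K R -> decomposable m (in_rect R).
Proof. by move=> szR RK; exists [:: R]; split=> //= us _; tauto. Qed.

Lemma decomposable_or m S1 S2 : decomposable m S1 -> decomposable m S2 ->
  decomposable m (fun us => S1 us \/ S2 us).
Proof.
move=> [Rs1 [Rs1K S1Rs1]] [Rs2 [Rs2K S2Rs2]]; exists (Rs1 ++ Rs2).
by split=> [|us szus]; rewrite ?All_cat ?Has_cat -?S1Rs1 -?S2Rs2.
Qed.

Lemma decomposable_Has T m (S : T -> seq (seq A) -> Prop) s :
  All (fun t => decomposable m (S t)) s -> decomposable m (fun us => Has (S^~ us) s).
Proof.
elim: s => [|t s IH] /=; first by move=> _; exact: decomposable_false.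
by move=> [St Ss]; apply: decomposable_or St (IH Ss).
Qed.

Lemma decomposable_exists_ltn n m (S : nat -> seq (seq A) -> Prop) :
  (forall j, j < n -> decomposable m (S j)) ->
  decomposable m (fun us => exists2 j, j < n & S j us).
Proof.
move=> SK; have SKs : All (fun j => decomposable m (S j)) (iota 0 n).
  by apply: All_in => j; rewrite mem_iota => /SK.
apply: decomposable_ext (decomposable_Has SKs) => us _; rewrite HasP.
by split=> -[j]; rewrite ?mem_iota => lt_jn Sj; exists j; rewrite ?mem_iota //; lia.
Qed.

Lemma decomposable_exists_fin (I : finType) m (S : I -> seq (seq A) -> Prop) :
  (forall i, decomposable m (S i)) -> decomposable m (fun us => exists i, S i us).
Proof.
move=> SK; have SKs : All (fun i => decomposable m (S i)) (enum I) by apply: All_forall.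
apply: decomposable_ext (decomposable_Has SKs) => us _; rewrite HasP.
by split=> -[i]; [exists i | exists i; rewrite ?mem_enum].
Qed.

Lemma decomposable_cons L m S : K L -> decomposable m S ->
  decomposable m.+1 (fun us => L (head [::] us) /\ S (behead us)).
Proof.
move=> KL [Rs [RsK SRs]]; exists (map (cons L) Rs); split.
  by rewrite All_map; apply: sub_All RsK => R /= [-> RK].
move=> [|u us] //= [/SRs->]; rewrite Has_map.
by rewrite Has_andl; elim: Rs {RsK SRs} => //= R Rs ->.
Qed.

Hypothesis K_full : K (@lang_full A).

Lemma decomposable_true m : decomposable m (fun _ => True).
Proof.
apply: decomposable_ext (decomposable_rect (size_nseq m _) (All_nseq m K_full)).
by move=> us <-; split=> // _; exact: in_rect_full.
Qed.

Lemma decomposable_const m (P : Prop) : decomposable m (fun _ => P).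
Proof.
have [HP|HnP] := classic P.
  by apply: decomposable_ext (decomposable_true m) => us _; tauto.
by apply: decomposable_ext (decomposable_false m) => us _; tauto.
Qed.

Lemma decomposable_slice k M i S : i + k <= M -> decomposable k S ->
  decomposable M (fun us => S (drop i (take (i + k) us))).
Proof.
move=> le_ikM [Rs [RsK SRs]].
apply: (@decomposable_ext _ (fun us => Has (fun R => in_rect (rect_pad i R (M - i - k)) us) Rs)).
  move=> us szus; rewrite SRs; last by rewrite size_drop size_takel; lia.
  by apply: (eq_Has_in RsK) => R [szR _]; rewrite (in_rect_pad szus szR le_ikM).
apply: decomposable_Has; apply: sub_All RsK => R [szR RK].
apply: decomposable_rect; first by rewrite /rect_pad !size_cat !size_nseq; lia.
by rewrite /rect_pad !All_cat; do !split=> //; apply: All_nseq.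
Qed.

Hypothesis K_empty : K (@lang_empty A).
Hypothesis K_union : forall L1 L2, K L1 -> K L2 -> K (lang_union L1 L2).

Lemma decomposable1_lang S : decomposable 1 S -> K (fun w => S [:: w]).
Proof.
move=> [Rs [RsK SRs]].
apply: (@lang_class_ext _ _ (fun w => Has (fun R => in_rect R [:: w]) Rs)).
  by move=> w; rewrite SRs.
elim: Rs RsK {SRs} => [|R Rs IH] /= => [_|[[szR RK] /IH KRs]].
  by apply: lang_class_ext K_empty.
case: R szR RK => [|L [|]] //= _ [KL _].
by apply: lang_class_ext (K_union KL KRs) => w; rewrite /lang_union; tauto.
Qed.

Hypothesis K_inter : forall L1 L2, K L1 -> K L2 -> K (lang_inter L1 L2).

Lemma decomposable_and m S1 S2 : decomposable m S1 -> decomposable m S2 ->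
  decomposable m (fun us => S1 us /\ S2 us).
Proof.
move=> [Rs1 [Rs1K S1Rs1]] [Rs2 [Rs2K S2Rs2]].
apply: (@decomposable_ext _
  (fun us => Has (fun R1 => Has (fun R2 => in_rect (rect_inter R1 R2) us) Rs2) Rs1)).
  move=> us szus; rewrite S1Rs1 // S2Rs2 // Has_andr.
  apply: (eq_Has_in Rs1K) => R1 [szR1 _]; rewrite Has_andl.
  by apply: (eq_Has_in Rs2K) => R2 [szR2 _]; rewrite in_rect_inter // szR1 szR2.
apply: decomposable_Has; apply: sub_All Rs1K => R1 [szR1 R1K].
apply: decomposable_Has; apply: sub_All Rs2K => R2 [szR2 R2K].
apply: decomposable_rect; first by rewrite size_rect_inter // szR1 szR2.
by elim: R1 R2 {szR1 szR2} R1K R2K => [|L1 R1 IH] [|L2 R2] //= [? ?] [? ?]; split; auto.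
Qed.

Lemma decomposable_All T m (S : T -> seq (seq A) -> Prop) s :
  All (fun t => decomposable m (S t)) s -> decomposable m (fun us => All (S^~ us) s).
Proof.
elim: s => [|t s IH] /=; first by move=> _; exact: decomposable_true.
by move=> [St Ss]; apply: decomposable_and St (IH Ss).
Qed.

Hypothesis K_compl : forall L, K L -> K (lang_compl L).

Lemma decomposable_not_rect R : All K R -> decomposable (size R) (fun us => ~ in_rect R us).
Proof.
elim: R => [|L R IH] /=.
  by move=> _; apply: decomposable_ext (decomposable_false 0) => -[|] //=; tauto.
move=> [KL RK].
apply: (@decomposable_ext _ (fun us => (lang_compl L (head [::] us) /\ True) \/
                                       (lang_full (head [::] us) /\ ~ in_rect R (behead us)))).
  by move=> [|u us] //= _; rewrite /lang_compl /lang_full; tauto.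
apply: decomposable_or.
  by apply: (decomposable_cons (S := fun _ => True)); [exact: K_compl | exact: decomposable_true].
by apply: (decomposable_cons (S := fun us => ~ in_rect R us)); [exact: K_full | exact: IH].
Qed.

Lemma decomposable_not m S : decomposable m S -> decomposable m (fun us => ~ S us).
Proof.
move=> [Rs [RsK SRs]].
apply: (@decomposable_ext _ (fun us => All (fun R => ~ in_rect R us) Rs)).
  by move=> us szus; rewrite SRs // not_Has.
apply: decomposable_All; apply: sub_All RsK => R [<- RK].
exact: decomposable_not_rect.
Qed.

Hypothesis K_merge : forall L1 L2 c,
  K L1 -> K L2 -> K (lang_concat L1 (lang_concat (lang_letter c) L2)).

Lemma decomposable_split m i c S : i <= m -> decomposable m.+2 S ->
  decomposable m.+1
    (fun us => exists u1 u2, nth [::] us i = u1 ++ c :: u2 /\ S (split_nth i us u1 u2)).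
Proof.
move=> le_im [Rs [RsK SRs]].
apply: (@decomposable_ext _ (fun us => Has (fun R => in_rect (rect_merge i c R) us) Rs)).
  move=> us szus.
  have szsplit u1 u2 : size (split_nth i us u1 u2) = m.+2.
    by rewrite size_split_nth szus.
  transitivity (Has (fun R => exists u1 u2,
      nth [::] us i = u1 ++ c :: u2 /\ in_rect R (split_nth i us u1 u2)) Rs).
    by apply: (eq_Has_in RsK) => R [szR _]; rewrite in_rect_merge ?szus ?szR.
  rewrite -Has_exists2; split=> -[u1 [u2 H]]; exists u1, u2.
    by move: H; rewrite -Has_andl -SRs.
  by rewrite -Has_andl -SRs.
apply: decomposable_Has; apply: sub_All RsK => R [szR RK].
apply: decomposable_rect; first by rewrite size_rect_merge szR.
rewrite /rect_merge All_cat /=; split; first exact: All_take.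
by split; [apply: K_merge; apply: All_nth | exact: All_drop].
Qed.

End Decomposable.

Lemma decomposable_mono (A : finType) (K K' : lang A -> Prop) m S :
  (forall L, K L -> K' L) -> decomposable K m S -> decomposable K' m S.
Proof.
move=> KK' [Rs [RsK SRs]]; exists Rs; split=> //.
by apply: sub_All RsK => R [szR RK]; split=> //; apply: sub_All RK.
Qed.

(** * FO(I_C) is contained in SF(C) *)

Lemma finite_image_reps (T : Type) (Q : finType) (f : T -> Q) :
  exists xs : seq T, forall x, Has (fun y => f y = f x) xs.
Proof.
suff [xs xsP] : exists xs : seq T, forall x, f x \in enum Q -> Has (fun y => f y = f x) xs.
  by exists xs => x; apply: xsP; rewrite mem_enum.
elim: (enum Q) => [|q qs [xs xsP]]; first by exists [::].
have [[x0 fx0]|no_x] := classic (exists x, f x = q).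
  by exists (x0 :: xs) => x; rewrite in_cons => /orP[/eqP->|/xsP]; [left | right].
exists xs => x; rewrite in_cons => /orP[/eqP fx|/xsP//].
by case: no_x; exists x.
Qed.

Section Prevariety.
Variable A : finType.
Variable C : lang A -> Prop.
Hypothesis prevC : prevariety C.

Lemma prevariety_factor L : C L ->
  exists PQs : seq (lang A * lang A), All (fun PQ => C PQ.1 /\ C PQ.2) PQs /\
    forall x y, L (x ++ y) <-> Has (fun PQ => PQ.1 x /\ PQ.2 y) PQs.
Proof.
have [C_reg [_ [C_full [_ [C_inter [C_compl [C_lquot C_rquot]]]]]]] := prevC.
move=> CL; have [Q [q0 [delta [F LF]]]] := C_reg L CL.
(* L (x ++ y) only depends on the state reached on x and on the action of y on states;
   finitely many words ys realise every action, and x is then classified by the right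
   quotients of L by the words of ys. *)
pose left_state x := foldl delta q0 x.
pose right_action y := [ffun q => foldl delta q y \in F].
have LE x y : L (x ++ y) <-> right_action y (left_state x) by rewrite LF foldl_cat ffunE.
have [xs xsP] := finite_image_reps left_state.
have [ys ysP] := finite_image_reps right_action.
have CP u vs : C (fun x => All (fun v => L (x ++ v) <-> L (u ++ v)) vs).
  elim: vs => [|v vs IH] /=; first exact: C_full.
  pose Lv w := L (w ++ v) <-> L (u ++ v).
  apply: (@lang_class_ext _ _ (lang_inter Lv _)) (C_inter _ _ _ IH); first by [].
  have [Luv|nLuv] := classic (L (u ++ v)).
    by apply: lang_class_ext (C_rquot v L CL) => w; rewrite /Lv /lang_rquot; tauto.
  apply: lang_class_ext (C_compl _ (C_rquot v L CL)) => w.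
  by rewrite /Lv /lang_compl /lang_rquot; tauto.
pose P u x := All (fun v => L (x ++ v) <-> L (u ++ v)) ys.
exists (map (fun u => (P u, lang_lquot u L)) xs); split.
  by rewrite All_map; apply: All_forall => u /=; split; [exact: CP | exact: C_lquot].
move=> x y; rewrite Has_map /=; split.
  move=> Lxy; apply: sub_Has (xsP x) => u eq_ux /=; split.
    by apply: All_forall => v; rewrite !LE eq_ux.
  by rewrite /lang_lquot LE eq_ux -LE.
move=> /Has_exists [u [Pux Luy]].
have [v [eq_vy Lv]] := Has_All (ysP y) Pux.
by rewrite LE -eq_vy -LE Lv LE eq_vy -LE.
Qed.

Lemma decomposable_interleave cs L : C L ->
  decomposable C (size cs).+1 (fun vs => L (interleave vs cs)).
Proof.
have [_ [_ [_ [_ [_ [_ [C_lquot _]]]]]]] := prevC.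
elim: cs L => [|c cs IH] L CL.
  apply: decomposable_ext (decomposable_rect (R := [:: L]) _ _) => //=.
  by move=> [|v [|]] //= _; tauto.
have [PQs [PQsC LPQs]] := prevariety_factor CL.
apply: (@decomposable_ext _ _ _ (fun vs => Has (fun PQ => PQ.1 (head [::] vs) /\
     lang_lquot [:: c] PQ.2 (interleave (behead vs) cs)) PQs)).
  by move=> [|v vs] //= _; rewrite LPQs.
apply: decomposable_Has; apply: sub_All PQsC => PQ [CP CQ].
apply: (decomposable_cons (S := fun vs => lang_lquot [:: c] PQ.2 (interleave vs cs))) => //.
exact/IH/C_lquot.
Qed.

End Prevariety.

Section MarkedWords.
Variable A : finType.
Implicit Types (us : seq (seq A)) (bs : seq A) (f : nat -> nat).

Definition marked_env us f : nat -> nat := fun y => mark us (f y).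

(* [mark us] is constant beyond [size us], hence the clamping. *)
Definition term_mark m f (t : fterm) :=
  match t with TVar x => minn (f x) m.+1 | TMin => 0 | TMax => m.+1 end.

Lemma term_mark_le m f t : term_mark m f t <= m.+1.
Proof. by case: t => //= x; rewrite geq_minr. Qed.

Lemma tval_marked us bs f t : size us = (size bs).+1 ->
  tval (interleave us bs) (marked_env us f) t = mark us (term_mark (size bs) f t).
Proof.
move=> szus; case: t => [x||] /=; last by rewrite -szus (mark_size szus).
- by rewrite /marked_env -szus; case: (leqP (size us) (f x)) => // /mark_oversize.
- by rewrite mark0.
Qed.

Lemma marked_env_upd us f x j : marked_env us (upd f x j) = upd (marked_env us f) x (mark us j).
Proof. by apply: functional_extensionality => y; rewrite /marked_env /upd; case: (y == x). Qed.

Lemma infix_interleave us bs i j : size us = (size bs).+1 -> i < j -> j <= size us ->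
  infix_word (interleave us bs) (mark us i) (mark us j) =
  interleave (drop i (take j us)) (drop i (take j.-1 bs)).
Proof.
move=> szus lt_ij le_j; rewrite /infix_word take_interleave //; last by lia.
have -> : mark us i = mark (take j us) i by rewrite /mark take_takel // ltnW.
by apply: drop_interleave; rewrite !size_takel //; lia.
Qed.

Definition split_env f x i := fun y => if y == x then i.+1 else bump i.+1 (f y).

Lemma marked_env_split us f x i u1 c u2 : i < size us -> nth [::] us i = u1 ++ c :: u2 ->
  marked_env (split_nth i us u1 u2) (split_env f x i) =
  upd (marked_env us f) x (mark us i + (size u1).+1).
Proof.
move=> lt_i eq_ui; apply: functional_extensionality => y; rewrite /marked_env /upd /split_env.
by case: (y == x); [exact: mark_split_nth eq_ui | exact: mark_split_nth_bump eq_ui].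
Qed.

Lemma sat_FEx_marked us bs f x g : size us = (size bs).+1 ->
  sat (interleave us bs) (marked_env us f) (FEx x g) <->
  (exists2 j, j < (size us).+1 & sat (interleave us bs) (marked_env us (upd f x j)) g) \/
  (exists2 i, i < size us & exists c u1 u2, nth [::] us i = u1 ++ c :: u2 /\
     sat (interleave (split_nth i us u1 u2) (take i bs ++ c :: drop i bs))
         (marked_env (split_nth i us u1 u2) (split_env f x i)) g).
Proof.
move=> szus; rewrite /= -(mark_size szus); split.
  case=> p [/mark_cases [[j le_j ->]|[i [u1 [c [u2 [lt_i eq_ui ->]]]]]] Hg].
    by left; exists j; rewrite ?marked_env_upd.
  right; exists i => //; exists c, u1, u2; split=> //.
  by rewrite (interleave_split_nth szus lt_i eq_ui) (marked_env_split f x lt_i eq_ui).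
case=> [[j lt_j Hg]|[i lt_i [c [u1 [u2 [eq_ui Hg]]]]]].
  by exists (mark us j); rewrite leq_mark // -marked_env_upd.
exists (mark us i + (size u1).+1); split.
  apply: (@leq_trans (mark us i.+1)); last by rewrite leq_mark.
  by rewrite markS // eq_ui size_cat /=; lia.
by rewrite -(marked_env_split f x lt_i eq_ui) -(interleave_split_nth szus lt_i eq_ui).
Qed.

End MarkedWords.

Section DefinableIsSF.
Variable A : finType.
Variable C : lang A -> Prop.
Hypothesis prevC : prevariety C.

Lemma SF_full : SF C (@lang_full A).
Proof. by case: prevC => [_ [_ [C_full _]]]; constructor. Qed.

Lemma SF_merge L1 L2 c :
  SF C L1 -> SF C L2 -> SF C (lang_concat L1 (lang_concat (lang_letter c) L2)).
Proof. by move=> SF1 SF2; do 2 constructor=> //; constructor. Qed.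

Definition sat_decomposable (phi : formula A) := forall m f bs, size bs = m ->
  decomposable (SF C) m.+1 (fun us => sat (interleave us bs) (marked_env us f) phi).

Lemma sat_decomposable_FEq t1 t2 : sat_decomposable (FEq A t1 t2).
Proof.
move=> m f bs szbs.
apply: decomposable_ext (decomposable_const SF_full _ (term_mark m f t1 = term_mark m f t2)).
move=> us szus; rewrite -szbs in szus; rewrite /= !tval_marked // szbs.
have le_mark t : term_mark m f t <= size us by rewrite szus szbs term_mark_le.
by split=> [->|/(mark_inj (le_mark t1) (le_mark t2))].
Qed.

Lemma sat_decomposable_FLabel a t : sat_decomposable (FLabel a t).
Proof.
move=> m f bs szbs; set j := term_mark m f t.
apply: decomposable_ext (decomposable_const SF_full _ ((0 < j <= m) /\ nth a bs j.-1 = a)).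
move=> us szus; rewrite -szbs in szus; rewrite /= tval_marked // szbs -/j.
have le_j : j <= size us by rewrite szus szbs term_mark_le.
have -> : (0 < mark us j) = (0 < j) by rewrite -{1}(mark0 us) ltn_mark.
have -> : (mark us j <= size (interleave us bs)) = (j <= m).
  by rewrite -ltnS -(mark_size szus) ltn_mark // szus szbs ltnS.
split=> -[/andP[j_gt0 le_jm] Hnth]; split; rewrite ?j_gt0 ?le_jm //.
  by rewrite nth_interleave // szbs.
by rewrite -(nth_interleave a szus) // szbs.
Qed.

Lemma sat_decomposable_FInf L t1 t2 : C L -> sat_decomposable (FInf L t1 t2).
Proof.
move=> CL m f bs szbs; set i := term_mark m f t1; set j := term_mark m f t2.
have le_i : i <= m.+1 := term_mark_le m f t1.
have le_j : j <= m.+1 := term_mark_le m f t2.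
have sat_inf us : size us = m.+1 ->
    sat (interleave us bs) (marked_env us f) (FInf L t1 t2) <->
    i < j /\ L (infix_word (interleave us bs) (mark us i) (mark us j)).
  by move=> szus; rewrite /= !tval_marked ?szus ?szbs // ltn_mark ?szus.
have [lt_ij|le_ji] := ltnP i j; last first.
  apply: decomposable_ext (decomposable_false _ _) => us /sat_inf->.
  by split=> // -[lt_ij]; rewrite ltnNge le_ji in lt_ij.
pose cs := drop i (take j.-1 bs).
have dec_L : decomposable (SF C) (j - i) (fun vs => L (interleave vs cs)).
  have szcs : (size cs).+1 = j - i by rewrite size_drop size_takel; lia.
  rewrite -szcs; apply: decomposable_mono (decomposable_interleave prevC cs CL).
  exact: SF_base.
have := decomposable_slice SF_full (M := m.+1) (i := i) _ dec_L.
rewrite subnKC ?(ltnW lt_ij) // => /(_ le_j); apply: decomposable_ext => us szus.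
by rewrite sat_inf // infix_interleave ?szus ?szbs //; tauto.
Qed.

Lemma sat_decomposable_FEx x g : sat_decomposable g -> sat_decomposable (FEx x g).
Proof.
move=> dec_g m f bs szbs.
apply: (@decomposable_ext _ _ _ (fun us =>
  (exists2 j, j < m.+2 & sat (interleave us bs) (marked_env us (upd f x j)) g) \/
  (exists2 i, i < m.+1 & exists c u1 u2, nth [::] us i = u1 ++ c :: u2 /\
     sat (interleave (split_nth i us u1 u2) (take i bs ++ c :: drop i bs))
         (marked_env (split_nth i us u1 u2) (split_env f x i)) g))).
  by move=> us szus; rewrite sat_FEx_marked szus ?szbs.
apply: decomposable_or; first by apply: decomposable_exists_ltn => j _; exact: dec_g.
apply: decomposable_exists_ltn => i lt_i; apply: decomposable_exists_fin => c.
apply: (decomposable_split SF_full SF_merge c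
  (S := fun vs => sat (interleave vs (take i bs ++ c :: drop i bs))
                      (marked_env vs (split_env f x i)) g)); first by lia.
by apply: dec_g; rewrite size_cat /= size_drop size_takel; lia.
Qed.

Lemma sat_decomposable_uses_only phi : uses_only C phi -> sat_decomposable phi.
Proof.
elim: phi => [t1 t2|a t|L t1 t2|g IHg h IHh|g IHg|x g IHg] /= Cphi.
- exact: sat_decomposable_FEq.
- exact: sat_decomposable_FLabel.
- exact: sat_decomposable_FInf.
- move: Cphi => [/IHg dec_g /IHh dec_h] m f bs szbs.
  exact: decomposable_or (dec_g m f bs szbs) (dec_h m f bs szbs).
- move=> m f bs szbs; have := IHg Cphi m f bs szbs.
  exact: decomposable_not SF_full (@SF_inter _ C) (@SF_compl _ C) _ _.
- exact/sat_decomposable_FEx/IHg.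
Qed.

Lemma FO_IC_SF L : FO_IC C L -> SF C L.
Proof.
have [_ [C_empty _]] := prevC; move=> [phi [Cphi [_ sat_phi]]].
have := sat_decomposable_uses_only Cphi (fun _ => 0) (bs := [::]) erefl.
move=> /(decomposable1_lang (SF_base C_empty) (@SF_union _ C)).
by apply: lang_class_ext => w; rewrite sat_phi /marked_env mark0.
Qed.

End DefinableIsSF.

Theorem theorem6p5 (A : finType) (C : lang A -> Prop) :
  prevariety C -> forall L : lang A, SF C L <-> FO_IC C L.
Proof.
move=> prevC L; have [_ [_ [C_full _]]] := prevC.
by split; [apply: SF_FO_IC | apply: FO_IC_SF].
Qed.
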